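(* Let $A\in\mathbb{R}_+^{n\times n}$ have all entries strictly positive. Then the following are equivalent: (i) $\frac{1}{n}\sum_{i=1}^n\sum_{j=1}^n a_{i,j}=\max_{B\in\Omega(A)}\rho(B)$; (ii) either the all-ones vector $(1,\dots,1)^T$ is an eigenvector of $A$ for the eigenvalue $\rho(A)$ (equivalently, all row sums of $A$ are equal), or there exists a nonsingular nonnegative diagonal matrix $D=\mathrm{diag}(d_1,\dots,d_n)$ such that $DA$ is the all-ones matrix, i.e. $d_i a_{i,j}=1$ for all $i,j$; (iii) $\frac{1}{n}\sum_{i=1}^n\sum_{j=1}^n a_{i,j}=\min_{B\in\Omega(A)}\rho(B)$.
   Context: For $A=(a_{i,j})\in\mathbb{R}_+^{n\times n}$ (nonnegative $n\times n$ matrices), $\Omega(A)=\{B\in\mathbb{R}_+^{n\times n}:\ \forall i\ \exists\text{ a permutation }\phi_i\text{ of }\{1,\dots,n\}\text{ with } b_{i,j}=a_{i,\phi_i(j)}\ \forall j\}$, the set of matrices whose rows are rearrangements of the corresponding rows of $A$. $\rho(B)$ denotes the spectral radius (Perron root) of $B$. *)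

From HB Require Import structures.
From mathcomp Require Import all_boot all_order all_algebra all_fingroup.
From mathcomp Require Import complex.
Set Implicit Arguments. Unset Strict Implicit. Unset Printing Implicit Defensive.
Import Order.TTheory GRing.Theory Num.Theory.
Local Open Scope ring_scope.

(* Coefficients: an arbitrary real closed field R (e.g. the reals);
   eigenvalues are taken in its algebraic closure R[i] = complex R. *)

Definition eigenvalues (R : rcfType) (n : nat) (B : 'M[R]_n) : seq R[i] :=
  sval (closed_field_poly_normal (char_poly (map_mx (real_complex R) B))).

(* Spectral radius: the largest modulus of an eigenvalue (0 if n = 0). *)
Definition spectral_radius (R : rcfType) (n : nat) (B : 'M[R]_n) : R :=
  \big[Num.max/0]_(z <- eigenvalues B) ComplexField.Normc.normc z.

Definition in_Omega (R : rcfType) (n : nat) (A B : 'M[R]_n) : Prop :=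
  forall i : 'I_n, exists s : 'S_n, forall j : 'I_n, B i j = A i (s j).

Definition is_max_rho_Omega (R : rcfType) (n : nat) (A : 'M[R]_n) (m : R) : Prop :=
  (exists2 B, in_Omega A B & spectral_radius B = m) /\
  (forall B, in_Omega A B -> spectral_radius B <= m).
Definition is_min_rho_Omega (R : rcfType) (n : nat) (A : 'M[R]_n) (m : R) : Prop :=
  (exists2 B, in_Omega A B & spectral_radius B = m) /\
  (forall B, in_Omega A B -> m <= spectral_radius B).

From HB Require Import structures.
From mathcomp Require Import all_boot all_order all_algebra all_fingroup.
From mathcomp Require Import complex polyrcf ring lra.
Import Order.TTheory GRing.Theory Num.Theory.
Local Open Scope ring_scope.

(* Write r for the vector of row sums of A, so that avg = (sum_j r_j) / n.
   For a nonnegative matrix B and a positive vector w, the Collatz-Wielandt bounds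
   give min_i (Bw)_i / w_i <= rho(B) <= max_i (Bw)_i / w_i, strictly when B is
   positive and Bw is not a multiple of w.  Averaged over all permutations s, sum_j a_{i,s(j)} r_j equals
   r_i * avg, so rearranging every row of A to lie above (resp. below) that mean
   gives B in Omega(A) with Br >= avg r (resp. <= avg r), strictly in a row where
   both that row of A and r are nonconstant.  Hence rho takes values on both sides
   of avg over Omega(A) unless all row sums are equal or all rows are constant;
   in those two cases every B in Omega(A) has the positive eigenvector 1, resp.
   its first column, with eigenvalue avg. *)

Section Ratios.
Context {R : realFieldType} {I : finType}.
Implicit Types (x y w : I -> R) (c : R).

Lemma ex_min_ratio (i0 : I) x w : (forall i, 0 < w i) ->
  exists i, forall j, x i / w i * w j <= x j.
Proof.
move=> hw; exists [arg min_(i < i0) (x i / w i)]%O.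
by case: arg_minP => // i _ hi j; rewrite -ler_pdivlMr ?hw //; exact: hi.
Qed.

Lemma ex_max_ratio (i0 : I) x w : (forall i, 0 < w i) ->
  exists i, forall j, x j <= x i / w i * w j.
Proof.
move=> hw; exists [arg max_(i > i0) (x i / w i)]%O.
by case: arg_maxP => // i _ hi j; rewrite -ler_pdivrMr ?hw //; exact: hi.
Qed.

Lemma ex_ratio_gt (i0 : I) {c x y} : (forall i, 0 < y i) ->
  (forall i, c * y i < x i) -> exists2 c', c < c' & forall i, c' * y i <= x i.
Proof.
move=> hy hc; have [i hi] := ex_min_ratio i0 x y hy.
by exists (x i / y i); rewrite // ltr_pdivlMr // mulrC.
Qed.

Lemma ex_ratio_lt (i0 : I) {c x y} : (forall i, 0 < y i) ->
  (forall i, x i < c * y i) -> exists2 c', c' < c & forall i, x i <= c' * y i.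
Proof.
move=> hy hc; have [i hi] := ex_max_ratio i0 x y hy.
by exists (x i / y i); rewrite // ltr_pdivrMr // mulrC.
Qed.

End Ratios.

Lemma sumr_gt0_at {R : numDomainType} {I : finType} (k : I) (F : I -> R) :
  (forall j, 0 <= F j) -> 0 < F k -> 0 < \sum_j F j.
Proof.
move=> hF hk; rewrite (bigD1 k) //= ltr_pwDl //.
by rewrite sumr_ge0 // => j _; apply: hF.
Qed.

Section Mean.
Context {R : realDomainType} {T : finType}.
Implicit Types (f : T -> R) (m : R).

Lemma ex_ge_mean (t0 : T) f m : \sum_t (f t - m) = 0 ->
  exists s, m <= f s /\ ((exists t1 t2, f t1 != f t2) -> m < f s).
Proof.
move=> hm; pose s := [arg max_(t > t0) f t]%O.
have hm' : \sum_t (m - f t) = 0.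
  by rewrite -[RHS]oppr0 -[in RHS]hm -sumrN; apply: eq_bigr => u _; rewrite opprB.
have f_le t : f t <= f s by rewrite /s; case: arg_maxP => // x _; apply.
have all_eq : f s <= m -> forall t, f t = m.
  move=> fsm t; apply/eqP; rewrite eq_sym -subr_eq0; apply/eqP.
  by apply: (psumr_eq0P _ hm') => // u _; rewrite subr_ge0 (le_trans (f_le u)).
exists s; split=> [|[t1 [t2 f12]]].
  by rewrite leNgt; apply/negP => fsm; move: (fsm); rewrite (all_eq (ltW fsm) s) ltxx.
by rewrite ltNge; apply: contra f12 => fsm; rewrite (all_eq fsm t1) (all_eq fsm t2).
Qed.

Lemma ex_le_mean (t0 : T) f m : \sum_t (f t - m) = 0 ->
  exists s, f s <= m /\ ((exists t1 t2, f t1 != f t2) -> f s < m).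
Proof.
move=> hm; have [|s [fs_le fs_lt]] := ex_ge_mean t0 (fun t => - f t) (- m).
  by rewrite -[RHS]oppr0 -[in RHS]hm -sumrN; apply: eq_bigr => t _; rewrite opprD.
exists s; split=> [|[t1 [t2 f12]]]; first by rewrite -lerN2.
by rewrite -ltrN2 fs_lt //; exists t1, t2; rewrite eqr_opp.
Qed.

End Mean.

Section Rearrangements.
Context {R : realFieldType} {n : nat}.
Implicit Types (a w : 'I_n -> R).

Lemma sum_perm_at a (j k : 'I_n) :
  \sum_(s : 'S_n) a (s j) = \sum_(s : 'S_n) a (s k).
Proof.
rewrite (reindex_inj (mulgI (tperm j k))) /=.
by apply: eq_bigr => s _; rewrite permM tpermL.
Qed.

Lemma sum_rearrangements_sub_mean a w : (0 < n)%N ->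
  \sum_(s : 'S_n) (\sum_j a (s j) * w j - (\sum_j a j) * (\sum_j w j) / n%:R) = 0.
Proof.
move=> hn; pose S := \sum_(s : 'S_n) a (s (Ordinal hn)).
have n_neq0 : n%:R != 0 :> R by rewrite pnatr_eq0 -lt0n.
have nS : n%:R * S = #|'S_n|%:R * \sum_j a j.
  transitivity (\sum_(j < n) \sum_(s : 'S_n) a (s j)).
    rewrite (eq_bigr (fun _ => S)) => [|j _]; last exact: sum_perm_at.
    by rewrite sumr_const card_ord mulr_natl.
  rewrite exchange_big (eq_bigr (fun _ => \sum_j a j)) => [|s _].
    by rewrite sumr_const mulr_natl.
  by rewrite [RHS](reindex_inj (@perm_inj _ s)).
rewrite sumrB exchange_big /= sumr_const.
rewrite (eq_bigr (fun j => S * w j)); last first.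
  by move=> j _; rewrite -mulr_suml; congr (_ * _); apply: sum_perm_at.
rewrite -mulr_sumr -mulr_natl; apply/eqP; rewrite subr_eq0; apply/eqP.
by apply: (mulfI n_neq0); rewrite mulrA nS; field.
Qed.

(* Composing s with the transposition (k1 k2) changes the sum by
   (a (s k1) - a (s k2)) * (w k1 - w k2); pick s with s k1 = j1 and s k2 = j2. *)
Lemma rearrangements_nonconst a w (j1 j2 k1 k2 : 'I_n) :
  a j1 != a j2 -> w k1 != w k2 ->
  exists s1 s2 : 'S_n, \sum_j a (s1 j) * w j != \sum_j a (s2 j) * w j.
Proof.
move=> ha hw; pose f (s : 'S_n) := \sum_j a (s j) * w j.
have jne : j1 != j2 by apply: contraNneq ha => ->.
have kne : k1 != k2 by apply: contraNneq hw => ->.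
pose t := tperm k1 k2.
have swap s : f s - f (t * s)%g = (a (s k1) - a (s k2)) * (w k1 - w k2).
  have -> : f (t * s)%g = \sum_j a (s j) * w (t j).
    rewrite /f [RHS](reindex_inj (@perm_inj _ t)); apply: eq_bigr => j _.
    by rewrite permM tpermK.
  rewrite /f -sumrB (bigD1 k1) //= (bigD1 k2) 1?eq_sym //=.
  rewrite big1 => [|j /andP [jk2 jk1]]; last by rewrite tpermD 1?eq_sym // subrr.
  by rewrite tpermL tpermR; ring.
pose m := tperm k1 j1 k2; pose s := (tperm k1 j1 * tperm m j2)%g.
have mj1 : m != j1.
  by rewrite /m -{2}(tpermL k1 j1) (inj_eq (@perm_inj _ (tperm k1 j1))) eq_sym.
have sk1 : s k1 = j1 by rewrite /s permM tpermL tpermD // eq_sym.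
have sk2 : s k2 = j2 by rewrite /s permM -/m tpermL.
exists s, (t * s)%g.
by rewrite -subr_eq0 swap sk1 sk2 mulf_neq0 // subr_eq0.
Qed.

Lemma ex_rearrangement_ge_mean a w : (0 < n)%N ->
  exists s : 'S_n, (\sum_j a j) * (\sum_j w j) / n%:R <= \sum_j a (s j) * w j /\
    ((exists j1 j2, a j1 != a j2) -> (exists k1 k2, w k1 != w k2) ->
     (\sum_j a j) * (\sum_j w j) / n%:R < \sum_j a (s j) * w j).
Proof.
move=> hn; have [s [ge gt]] := ex_ge_mean 1%g _ _ (sum_rearrangements_sub_mean a w hn).
exists s; split=> // -[j1 [j2 ha]] [k1 [k2 hw]]; apply: gt.
exact: rearrangements_nonconst ha hw.
Qed.

Lemma ex_rearrangement_le_mean a w : (0 < n)%N ->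
  exists s : 'S_n, \sum_j a (s j) * w j <= (\sum_j a j) * (\sum_j w j) / n%:R /\
    ((exists j1 j2, a j1 != a j2) -> (exists k1 k2, w k1 != w k2) ->
     \sum_j a (s j) * w j < (\sum_j a j) * (\sum_j w j) / n%:R).
Proof.
move=> hn; have [s [le lt]] := ex_le_mean 1%g _ _ (sum_rearrangements_sub_mean a w hn).
exists s; split=> // -[j1 [j2 ha]] [k1 [k2 hw]]; apply: lt.
exact: rearrangements_nonconst ha hw.
Qed.

End Rearrangements.

Lemma char_poly_trmx (R : comNzRingType) n (B : 'M[R]_n) :
  char_poly B^T = char_poly B.
Proof.
rewrite /char_poly -det_tr; congr (\det _).
by apply/matrixP => i j; rewrite !mxE eq_sym.
Qed.

Section Eigenvalues.
Context {R : rcfType} {n : nat}.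
Local Notation normc := ComplexField.Normc.normc.

Lemma normcE (z : R[i]) : `|z| = ((normc z)%:C)%C.
Proof. by case: z => a b; rewrite normc_def. Qed.

Lemma normc_ge0 (z : R[i]) : 0 <= normc z.
Proof. by rewrite -lecR -normcE normr_ge0. Qed.

Lemma normc_real (t : R) : 0 <= t -> normc (t%:C)%C = t.
Proof.
by move=> t0; rewrite /ComplexField.Normc.normc /= expr0n addr0 sqrtr_sqr ger0_norm.
Qed.

Lemma mem_eigenvalues (B : 'M[R]_n) z :
  (z \in eigenvalues B) = root (char_poly (map_mx (real_complex R) B)) z.
Proof.
rewrite /eigenvalues; case: (closed_field_poly_normal _) => r /= ->.
by rewrite (monicP (char_poly_monic _)) scale1r root_prod_XsubC.
Qed.

Lemma eigenvalues_eigenvector (B : 'M[R]_n) z : z \in eigenvalues B ->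
  exists2 v : 'I_n -> R[i], (exists k, v k != 0) &
    forall i, \sum_j ((B i j)%:C)%C * v j = z * v i.
Proof.
rewrite mem_eigenvalues -char_poly_trmx -eigenvalue_root_char.
case/eigenvalueP => v eig_v v0; exists (fun j => v 0 j).
  apply/existsP; apply: contraNT v0; rewrite negb_exists => /forallP v0.
  by apply/eqP/rowP => j; rewrite mxE; apply/eqP/negPn.
move=> i; have /rowP/(_ i) := eig_v; rewrite !mxE => <-.
by apply: eq_bigr => j _; rewrite !mxE mulrC.
Qed.

Lemma spectral_radius_ge_eigenvalue {B : 'M[R]_n} {t : R} :
  0 <= t -> root (char_poly B) t -> t <= spectral_radius B.
Proof.
move=> t0 rt; rewrite -[t]normc_real //.
apply: (le_bigmax_seq 0 _ predT) => //.
by rewrite mem_eigenvalues -map_char_poly rmorph_root.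
Qed.

End Eigenvalues.

Section ScaledResolvent.
Context {R : comNzRingType} {n : nat} (B : 'M[R]_n) (w : 'I_n -> R).

(* Since adj(tI - B) = P(t) (tI - B)^-1 for P the characteristic polynomial,
   this is the polynomial vector P(t)^2 (tI - B)^-1 w. *)
Definition scaled_resolvent (i : 'I_n) : {poly R} :=
  char_poly B * (\adj (char_poly_mx B) *m \col_k (w k)%:P) i 0.

Lemma scaled_resolventE t i :
  t * (scaled_resolvent i).[t] - \sum_j B i j * (scaled_resolvent j).[t] =
  (char_poly B).[t] ^+ 2 * w i.
Proof.
set U := \adj (char_poly_mx B) *m \col_k (w k)%:P.
have /matrixP/(_ i 0) : char_poly_mx B *m U = char_poly B *: \col_k (w k)%:P.
  by rewrite /U mulmxA mul_mx_adj mul_scalar_mx.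
rewrite [LHS]mxE [RHS]mxE [X in _ * X]mxE => /(congr1 (horner^~ t)) E.
rewrite hornerM hornerC horner_sum (bigD1 i) //= in E.
rewrite /scaled_resolvent -/U hornerM; clearbody U.
rewrite (eq_bigr (fun j => - (B i j * (U j 0).[t]))) in E; last first.
  move=> j ji; rewrite /char_poly_mx !mxE eq_sym (negPf ji) mulr0n sub0r.
  by rewrite hornerM hornerN hornerC mulNr.
rewrite sumrN /char_poly_mx !mxE eqxx mulr1n !hornerE in E.
rewrite (eq_bigr (fun j => (char_poly B).[t] * (B i j * (U j 0).[t]))).
  by rewrite -mulr_sumr (bigD1 i) //= expr2 -mulrA -E; ring.
by move=> j _; rewrite hornerM mulrCA.
Qed.

End ScaledResolvent.

Lemma resolvent_min_ratio {R : realFieldType} {n} (B : 'M[R]_n) (w y : 'I_n -> R) t k :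
  (0 < n)%N -> (forall i j, 0 <= B i j) -> (forall i, 0 < w i) -> 0 < k ->
  (forall i, t * y i - \sum_j B i j * y j = k * w i) ->
  exists i, (forall j, y i / w i * w j <= y j) /\
            0 < y i / w i * (t * w i - \sum_j B i j * w j).
Proof.
move=> hn hB hw hk hy; have [i hi] := ex_min_ratio (Ordinal hn) y w hw.
exists i; split=> //; set z := y i / w i in hi *.
have yi : y i = z * w i by rewrite /z divfK // gt_eqF.
have Bwy : z * \sum_j B i j * w j <= \sum_j B i j * y j.
  by rewrite mulr_sumr; apply: ler_sum => j _; rewrite mulrCA ler_wpM2l.
apply: (lt_le_trans (_ : 0 < k * w i)); first by rewrite mulr_gt0.
by rewrite -hy yi mulrBr mulrCA lerB.
Qed.

(* t0 is the largest root in [a, b) of the product of the u i, or a if none. *)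
Lemma ex_last_nonneg {R : rcfType} {I : finType} (u : I -> {poly R}) a b :
  a < b -> (forall i, 0 < (u i).[b]) ->
  exists t0, [/\ a <= t0, forall i, 0 <= (u i).[t0] &
                 t0 = a \/ exists i, root (u i) t0].
Proof.
move=> ab ub; pose Q := \prod_i u i.
have Qb : 0 < Q.[b] by rewrite horner_prod prodr_gt0.
have Q0 : Q != 0 by apply: contraTneq Qb => ->; rewrite horner0 ltxx.
have [t0 [at0 t0b noroot ends]] : exists t0, [/\ a <= t0, t0 < b,
    forall z, z \in `]t0, b[ -> ~~ root Q z & root Q t0 \/ t0 = a].
  case: (prev_rootP Q a b) => [Q_eq0 | t0 _ /rootP Qt0 t0in hno | c _ ca hno].
  - by rewrite Q_eq0 eqxx in Q0.
  - by exists t0; split; rewrite ?ltW ?(itvP t0in) //; left.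
  - by exists c; rewrite ca (min_idPl (ltW ab)) in hno *; split=> //; right.
exists t0; split => // [i | ].
  rewrite leNgt; apply/negP => ut0.
  have sgn : (u i).[t0] * (u i).[b] < 0 by rewrite pmulr_llt0.
  have [x xin /rootP ux] := poly_ivtoo (ltW t0b) sgn.
  by have := noroot x xin; rewrite /root /Q horner_prod (bigD1 i) //= ux mul0r eqxx.
case: ends => [/rootP|]; last by left.
by rewrite /Q horner_prod => /eqP /prodf_eq0 [i _ /eqP ui]; right; exists i; apply/rootP.
Qed.

Section CollatzWielandt.
Context {R : rcfType} {n : nat}.
Local Notation normc := ComplexField.Normc.normc.
Implicit Types (B : 'M[R]_n) (w y : 'I_n -> R) (c t : R).

Lemma eigenvalue_normc_le B w c z :
  (forall i j, 0 <= B i j) -> (forall i, 0 < w i) ->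
  (forall i, \sum_j B i j * w j <= c * w i) ->
  z \in eigenvalues B -> normc z <= c.
Proof.
move=> hB hw hBw /eigenvalues_eigenvector [v [k vk] eig_v].
pose N j := normc (v j).
have [i0 Nle] := ex_max_ratio k N w hw; set m := N i0 / w i0 in Nle.
have Nk : 0 < N k.
  rewrite lt_def normc_ge0 andbT; apply: contra vk => /eqP N0.
  by rewrite -normr_eq0 normcE -/(N k) N0.
have m_gt0 : 0 < m by rewrite -(pmulr_lgt0 _ (hw k)) (lt_le_trans Nk (Nle k)).
have Ni0 : N i0 = m * w i0 by rewrite /m divfK // gt_eqF.
have zN : normc z * N i0 <= \sum_j B i0 j * N j.
  rewrite /N -ComplexField.Normc.normcM -eig_v -lecR -normcE rmorph_sum.
  apply: le_trans (ler_norm_sum _ _ _) _; apply: ler_sum => j _.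
  by rewrite normcE ComplexField.Normc.normcM normc_real.
have Nc : \sum_j B i0 j * N j <= c * N i0.
  apply: le_trans (_ : \sum_j m * (B i0 j * w j) <= _).
    by apply: ler_sum => j _; rewrite mulrCA ler_wpM2l.
  by rewrite -mulr_sumr Ni0 mulrCA ler_wpM2l // ltW.
by rewrite -(ler_pM2r (_ : 0 < N i0)) ?(le_trans zN) // Ni0 mulr_gt0.
Qed.

Lemma spectral_radius_le B w c : (0 < n)%N ->
  (forall i j, 0 <= B i j) -> (forall i, 0 < w i) ->
  (forall i, \sum_j B i j * w j <= c * w i) ->
  spectral_radius B <= c.
Proof.
move=> hn hB hw hBw.
have c_ge0 : 0 <= c.
  rewrite -(pmulr_lge0 c (hw (Ordinal hn))); apply: le_trans (hBw _).
  by rewrite sumr_ge0 // => j _; rewrite mulr_ge0 // ltW.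
rewrite /spectral_radius big_seq; apply: bigmax_le => // z.
exact: eigenvalue_normc_le _ _ _ _ hB hw hBw.
Qed.

(* The vector u(t) = P(t)^2 (tI - B)^-1 w is positive for large t.  Wherever
   u(t) >= 0 and P(t) != 0, the identity (tI - B) u(t) = P(t)^2 w forces u(t) > 0;
   so if P had no root t >= c, u would stay positive down to t = c, which
   contradicts c w <= B w. *)
Lemma char_poly_root_ge B w c : (0 < n)%N ->
  (forall i j, 0 <= B i j) -> (forall i, 0 < w i) -> 0 < c ->
  (forall i, c * w i <= \sum_j B i j * w j) ->
  ~ (forall t, c <= t -> ~~ root (char_poly B) t).
Proof.
move=> hn hB hw hc hBw noroot.
pose P := char_poly B; pose u := scaled_resolvent B w.
have P2_gt0 t : c <= t -> 0 < P.[t] ^+ 2.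
  by move=> ct; rewrite exprn_even_gt0 //; apply: noroot.
have key t : c <= t -> exists i, (forall j, (u i).[t] / w i * w j <= (u j).[t]) /\
    0 < (u i).[t] / w i * (t * w i - \sum_j B i j * w j).
  move=> ct; apply: resolvent_min_ratio (P2_gt0 t ct) _ => // i.
  exact: scaled_resolventE.
have [i0 hi0] := ex_max_ratio (Ordinal hn) (fun i => \sum_j B i j * w j) w hw.
pose T := Num.max c ((\sum_j B i0 j * w j) / w i0) + 1.
have cT : c < T by rewrite /T ltr_pwDr // le_max lexx.
have uT i : 0 < (u i).[T].
  have [k [hk gap]] := key T (ltW cT).
  have BwT : 0 < T * w k - \sum_j B k j * w j.
    rewrite subr_gt0; apply: le_lt_trans (hi0 k) _; rewrite ltr_pM2r //.
    by rewrite /T ltr_pwDr // le_max lexx orbT.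
  by rewrite pmulr_lgt0 // in gap; apply: lt_le_trans (hk i); rewrite mulr_gt0.
have [t0 [ct0 u_ge0 t0E]] := ex_last_nonneg _ _ _ cT uT.
have u_gt0 i : 0 < (u i).[t0].
  have t0_gt0 : 0 < t0 by apply: lt_le_trans ct0.
  have Pw : 0 < P.[t0] ^+ 2 * w i by rewrite mulr_gt0 ?P2_gt0.
  have Bu : 0 <= \sum_j B i j * (u j).[t0].
    by apply: sumr_ge0 => j _; exact: mulr_ge0 (hB i j) (u_ge0 j).
  rewrite -(pmulr_rgt0 _ t0_gt0); have := scaled_resolventE B w t0 i; lra.
case: t0E => [t0c | [k /rootP uk]]; last by have := u_gt0 k; rewrite uk ltxx.
have [k [_ gap]] := key t0 ct0; move: gap; rewrite t0c ltNge mulr_ge0_le0 //.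
  by rewrite divr_ge0 // ltW // -t0c.
by rewrite subr_le0.
Qed.

Lemma spectral_radius_ge B w c : (0 < n)%N ->
  (forall i j, 0 <= B i j) -> (forall i, 0 < w i) -> 0 < c ->
  (forall i, c * w i <= \sum_j B i j * w j) ->
  c <= spectral_radius B.
Proof.
move=> hn hB hw hc hBw; rewrite leNgt; apply/negP => rho_lt_c.
apply: (char_poly_root_ge _ _ _ hn hB hw hc hBw) => t ct; apply/negP => rt.
have := spectral_radius_ge_eigenvalue (le_trans (ltW hc) ct) rt.
by rewrite leNgt (lt_le_trans rho_lt_c ct).
Qed.

Lemma spectral_radius_eigenvector B w c : (0 < n)%N ->
  (forall i j, 0 <= B i j) -> (forall i, 0 < w i) -> 0 < c ->
  (forall i, \sum_j B i j * w j = c * w i) ->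
  spectral_radius B = c.
Proof.
move=> hn hB hw hc hBw; apply/le_anti/andP; split.
  by apply: (spectral_radius_le _ _ _ hn hB hw) => i; rewrite hBw.
by apply: (spectral_radius_ge _ _ _ hn hB hw hc) => i; rewrite hBw.
Qed.

Lemma spectral_radius_gt B w c : (0 < n)%N ->
  (forall i j, 0 < B i j) -> (forall i, 0 < w i) -> 0 < c ->
  (forall i, c * w i <= \sum_j B i j * w j) ->
  (exists i, c * w i < \sum_j B i j * w j) ->
  c < spectral_radius B.
Proof.
move=> hn hB hw hc hBw [k hk]; pose y i := \sum_j B i j * w j.
have y_gt0 i : 0 < y i by apply: lt_le_trans (hBw i); rewrite mulr_gt0.
have gap i : c * y i < \sum_j B i j * y j.
  rewrite -subr_gt0 /y mulr_sumr -sumrB.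
  under eq_bigr do rewrite -mulrCA -mulrBr.
  apply: (sumr_gt0_at k) => [j|]; last by rewrite (mulr_gt0 (hB i k)) ?subr_gt0.
  by rewrite (mulr_ge0 (ltW (hB i j))) ?subr_ge0.
have [c' cc' hc'] := ex_ratio_gt (Ordinal hn) y_gt0 gap.
apply: (lt_le_trans cc'); apply: (spectral_radius_ge _ _ _ hn _ y_gt0) => //.
- by move=> i j; apply: ltW.
- exact: lt_trans cc'.
Qed.

Lemma spectral_radius_lt B w c : (0 < n)%N ->
  (forall i j, 0 < B i j) -> (forall i, 0 < w i) ->
  (forall i, \sum_j B i j * w j <= c * w i) ->
  (exists i, \sum_j B i j * w j < c * w i) ->
  spectral_radius B < c.
Proof.
move=> hn hB hw hBw [k hk]; pose y i := \sum_j B i j * w j.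
have y_gt0 i : 0 < y i.
  by apply: (sumr_gt0_at i) => [j|]; rewrite ?mulr_gt0 // mulr_ge0 // ltW.
have gap i : \sum_j B i j * y j < c * y i.
  rewrite -subr_gt0 /y mulr_sumr -sumrB.
  under eq_bigr do rewrite -mulrCA -mulrBr.
  apply: (sumr_gt0_at k) => [j|]; last by rewrite (mulr_gt0 (hB i k)) ?subr_gt0.
  by rewrite (mulr_ge0 (ltW (hB i j))) ?subr_ge0.
have [c' c'c hc'] := ex_ratio_lt (Ordinal hn) y_gt0 gap.
apply: (le_lt_trans _ c'c); apply: (spectral_radius_le _ _ _ hn _ y_gt0) => //.
by move=> i j; apply: ltW.
Qed.

End CollatzWielandt.

Definition mean_row_sum {R : numFieldType} {n} (A : 'M[R]_n) : R :=
  n%:R^-1 * \sum_i \sum_j A i j.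

Definition equal_row_sums {R : numFieldType} {n} (A : 'M[R]_n) : bool :=
  [forall i, forall k, \sum_j A i j == \sum_j A k j].

Definition constant_rows {R : numFieldType} {n} (A : 'M[R]_n) : bool :=
  [forall i, forall j, forall k, A i j == A i k].

Section Omega.
Context {R : rcfType} {n : nat} {A : 'M[R]_n}.
Hypotheses (hn : (0 < n)%N) (hA : forall i j, 0 < A i j).
Implicit Type B : 'M[R]_n.

Lemma in_Omega_refl : in_Omega A A.
Proof. by move=> i; exists 1%g => j; rewrite perm1. Qed.

Lemma in_Omega_gt0 {B} : in_Omega A B -> forall i j, 0 < B i j.
Proof. by move=> hB i j; have [s ->] := hB i. Qed.

Lemma in_Omega_row_sum {B} : in_Omega A B -> forall i, \sum_j B i j = \sum_j A i j.
Proof.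
move=> hB i; have [s Bs] := hB i; rewrite (eq_bigr _ (fun j _ => Bs j)).
by rewrite [RHS](reindex_inj (@perm_inj _ s)).
Qed.

Lemma row_sum_gt0 i : 0 < \sum_j A i j.
Proof. by apply: (sumr_gt0_at i) => // j; apply: ltW. Qed.

Lemma mean_row_sum_gt0 : 0 < mean_row_sum A.
Proof.
rewrite /mean_row_sum mulr_gt0 ?invr_gt0 ?ltr0n //.
by apply: (sumr_gt0_at (Ordinal hn)) => [i|]; rewrite ?ltW ?row_sum_gt0.
Qed.

Lemma row_sums_ones_eigenvector :
  A *m const_mx 1 = spectral_radius A *: (const_mx 1 : 'cV[R]_n) <-> equal_row_sums A.
Proof.
have rowE i : (A *m (const_mx 1 : 'cV[R]_n)) i 0 = \sum_j A i j.
  by rewrite mxE; apply: eq_bigr => j _; rewrite mxE mulr1.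
split=> [eig | /forallP eq_sums].
  by apply/forallP => i; apply/forallP => k; rewrite -!rowE eig !mxE.
have rhoA : spectral_radius A = \sum_j A (Ordinal hn) j.
  apply: (spectral_radius_eigenvector _ (fun=> 1) _ hn); rewrite ?row_sum_gt0 //.
    by move=> i j; apply: ltW.
  move=> i; rewrite mulr1 -(eqP (forallP (eq_sums i) _)).
  by apply: eq_bigr => j _; rewrite mulr1.
by apply/colP => i; rewrite rowE !mxE mulr1 rhoA; apply/eqP/(forallP (eq_sums i)).
Qed.

Lemma diag_scaling_ones :
  (exists d : 'rV[R]_n, (forall i, 0 <= d 0 i) /\ diag_mx d \in unitmx /\
                        diag_mx d *m A = const_mx 1) <-> constant_rows A.
Proof.
split=> [[d [_ [_ dA]]] | /forallP const].
  have dA1 i j : d 0 i * A i j = 1.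
    by have /matrixP/(_ i j) := dA; rewrite mul_diag_mx !mxE.
  apply/forallP => i; apply/forallP => j; apply/forallP => k.
  have d_neq0 : d 0 i != 0.
    by apply: contra_eqN (dA1 i j) => /eqP ->; rewrite mul0r eq_sym oner_eq0.
  by apply/eqP/(mulfI d_neq0); rewrite !dA1.
exists (\row_i (A i (Ordinal hn))^-1); split; [|split].
- by move=> i; rewrite mxE invr_ge0 ltW.
- rewrite unitmxE det_diag unitfE; apply/prodf_neq0 => i _.
  by rewrite mxE invr_eq0 gt_eqF.
- apply/matrixP => i j; rewrite mul_diag_mx !mxE.
  by rewrite (eqP (forallP (forallP (const i) j) (Ordinal hn))) mulVf // gt_eqF.
Qed.

Lemma in_Omega_spectral_radius_equal_row_sums :
  equal_row_sums A -> forall B, in_Omega A B -> spectral_radius B = mean_row_sum A.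
Proof.
move=> /forallP eq_sums B hB; pose r := \sum_j A (Ordinal hn) j.
have rowA i : \sum_j A i j = r by apply/eqP/(forallP (eq_sums i)).
transitivity r.
  apply: (spectral_radius_eigenvector _ (fun=> 1) _ hn); rewrite ?row_sum_gt0 //.
    by move=> i j; apply/ltW/(in_Omega_gt0 hB).
  move=> i; rewrite mulr1 -(rowA i) -(in_Omega_row_sum hB).
  by apply: eq_bigr => j _; rewrite mulr1.
rewrite /mean_row_sum (eq_bigr (fun=> r)) // sumr_const card_ord.
by rewrite -[r *+ n]mulr_natl mulKf // pnatr_eq0 -lt0n.
Qed.

Lemma in_Omega_spectral_radius_constant_rows :
  constant_rows A -> forall B, in_Omega A B -> spectral_radius B = mean_row_sum A.
Proof.
move=> /forallP const B hB; pose i0 := Ordinal hn.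
have rowA i j : A i j = A i i0 by apply/eqP/(forallP (forallP (const i) j)).
have rowB i j : B i j = A i i0 by have [s ->] := hB i; apply: rowA.
transitivity (\sum_k A k i0).
  apply: (spectral_radius_eigenvector _ (fun i => A i i0) _ hn) => //.
  - by move=> i j; apply/ltW/(in_Omega_gt0 hB).
  - by apply: (sumr_gt0_at i0) => // k; apply: ltW.
  by move=> i; rewrite mulr_suml; apply: eq_bigr => j _; rewrite rowB mulrC.
rewrite /mean_row_sum [in RHS](eq_bigr (fun i => A i i0 *+ n)); last first.
  by move=> i _; rewrite (eq_bigr (fun=> A i i0)) ?sumr_const ?card_ord.
by rewrite sumrMnl -[X in _ * X]mulr_natl mulKf // pnatr_eq0 -lt0n.
Qed.

Lemma nonconstant_row_and_row_sums :
  ~~ (equal_row_sums A || constant_rows A) ->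
  (exists i j1 j2, A i j1 != A i j2) /\
  (exists k1 k2, \sum_j A k1 j != \sum_j A k2 j).
Proof.
rewrite negb_or => /andP [/forallPn [k1 /forallPn [k2 hk]]].
case/forallPn => i /forallPn [j1 /forallPn [j2 hj]].
by split; [exists i, j1, j2 | exists k1, k2].
Qed.

Lemma row_sum_rearrangement_mean i :
  (\sum_j A i j) * (\sum_k \sum_j A k j) / n%:R = mean_row_sum A * \sum_j A i j.
Proof. by rewrite /mean_row_sum; ring. Qed.

Lemma ex_in_Omega_spectral_radius_gt :
  ~~ (equal_row_sums A || constant_rows A) ->
  exists2 B, in_Omega A B & mean_row_sum A < spectral_radius B.
Proof.
move=> /nonconstant_row_and_row_sums [[i1 row1] sums]; pose r i := \sum_j A i j.
have [sg hsg] := fin_all_exists (fun i => ex_rearrangement_ge_mean (A i) r hn).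
pose B := \matrix_(i, j) A i (sg i j).
have BrE i : \sum_j B i j * r j = \sum_j A i (sg i j) * r j.
  by apply: eq_bigr => j _; rewrite mxE.
exists B; first by move=> i; exists (sg i) => j; rewrite mxE.
apply: (spectral_radius_gt _ _ _ hn _ row_sum_gt0 mean_row_sum_gt0).
- by move=> i j; rewrite mxE.
- by move=> i; rewrite BrE -row_sum_rearrangement_mean; case: (hsg i).
- by exists i1; rewrite BrE -row_sum_rearrangement_mean; apply: (hsg i1).2.
Qed.

Lemma ex_in_Omega_spectral_radius_lt :
  ~~ (equal_row_sums A || constant_rows A) ->
  exists2 B, in_Omega A B & spectral_radius B < mean_row_sum A.
Proof.
move=> /nonconstant_row_and_row_sums [[i1 row1] sums]; pose r i := \sum_j A i j.
have [sg hsg] := fin_all_exists (fun i => ex_rearrangement_le_mean (A i) r hn).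
pose B := \matrix_(i, j) A i (sg i j).
have BrE i : \sum_j B i j * r j = \sum_j A i (sg i j) * r j.
  by apply: eq_bigr => j _; rewrite mxE.
exists B; first by move=> i; exists (sg i) => j; rewrite mxE.
apply: (spectral_radius_lt _ _ _ hn _ row_sum_gt0).
- by move=> i j; rewrite mxE.
- by move=> i; rewrite BrE -row_sum_rearrangement_mean; case: (hsg i).
- by exists i1; rewrite BrE -row_sum_rearrangement_mean; apply: (hsg i1).2.
Qed.

End Omega.

Theorem theorem3p2 (R : rcfType) (n : nat) (hn : (0 < n)%N) (A : 'M[R]_n)
    (hA : forall i j, 0 < A i j) :
  let avg := (n%:R)^-1 * \sum_(i < n) \sum_(j < n) A i j in
  let cond_i := is_max_rho_Omega A avg in
  let cond_ii :=
    (A *m const_mx 1 = spectral_radius A *: (const_mx 1 : 'cV[R]_n)) \/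
    (exists d : 'rV[R]_n, (forall i, 0 <= d 0 i) /\ diag_mx d \in unitmx /\
                          diag_mx d *m A = const_mx 1) in
  let cond_iii := is_min_rho_Omega A avg in
  (cond_i <-> cond_ii) /\ (cond_ii <-> cond_iii).
Proof.
move=> avg cond_i cond_ii cond_iii.
have iiE : cond_ii <-> equal_row_sums A || constant_rows A.
  rewrite /cond_ii (row_sums_ones_eigenvector hn hA) (diag_scaling_ones hn hA).
  exact: (rwP orP).
have rho_avg : equal_row_sums A || constant_rows A ->
    forall B, in_Omega A B -> spectral_radius B = avg.
  case/orP; [exact: in_Omega_spectral_radius_equal_row_sums |
             exact: in_Omega_spectral_radius_constant_rows].
have avg_attained : equal_row_sums A || constant_rows A ->
    exists2 B, in_Omega A B & spectral_radius B = avg.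
  by move=> ii; exists A; [exact: in_Omega_refl | exact: (rho_avg ii A in_Omega_refl)].
rewrite /cond_i /cond_iii iiE; split; split.
- case=> _ le_avg; apply/negPn/negP => /(ex_in_Omega_spectral_radius_gt hn hA).
  by case=> B hB; rewrite ltNge le_avg.
- by move=> ii; split; [exact: avg_attained | move=> B /(rho_avg ii) ->].
- by move=> ii; split; [exact: avg_attained | move=> B /(rho_avg ii) ->].
- case=> _ avg_le; apply/negPn/negP => /(ex_in_Omega_spectral_radius_lt hn hA).
  by case=> B hB; rewrite ltNge avg_le.
Qed.
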